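(* Let $u=s_{i_1}\cdots s_{i_l}$ and $v=s_{j_1}\cdots s_{j_m}$ be reduced words for glides in $\hat S_n$ with offsets $k_1,k_2$, with $vu$ reduced, and let $\tilde v=\rho^{-k_2}(v)$ (with reduced word $s_{j_1-k_2}\cdots s_{j_m-k_2}$). Let $\Gamma$ be the (lifted, wire-labelled) wiring diagram of the bi-infinite word $\cdots\rho^{2k_1}(u)\rho^{k_1}(u)\,u\,\rho^{-k_1}(u)\cdots$, in which the $j$-th crossing of the copy $\rho^{-ik_1}(u)$ is called vertex $(j,i)$, and let $\Gamma'$ be the diagram obtained after $m\ge0$ steps of the time evolution, in which the $j$-th crossing of the $i$-th copy of a rotation of $u$ is again called vertex $(j,i)$. Then for every $i\in\mathbb Z$ there is an isomorphism of the (unweighted) cylindric wiring diagrams $\Gamma\to\Gamma'$ sending vertex $(j,i_0)$ to vertex $(j,i_0+i)$ for all $j,i_0$, and if a chamber of $\Gamma$ has label $\mathbf s$ then the corresponding chamber of $\Gamma'$ has label $$\mathbf s'=\mathbf s+i\,t(u)-m\,t(\tilde v)$$ (as elements of $\mathbb Z^n/\mathbb Z(1,\dots,1)$).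
   Context: $\hat S_n$: generators $s_0,\dots,s_{n-1}$ (indices mod $n$), relations $s_i^2=1$, $s_is_js_i=s_js_is_j$ if $i-j\equiv\pm1$, $s_is_j=s_js_i$ if $i-j\not\equiv0,\pm1$. $\rho$ is the automorphism $s_i\mapsto s_{i+1}$; $\phi:\hat S_n\to S_n$, $s_i\mapsto(i\ i+1)$, $s_0\mapsto(1\ n)$; a glide of offset $k\in\{0,\dots,n-1\}$ is $g$ with $\phi(g)(j)\equiv j+k\pmod n$; for glides $u,v$ of offsets $k_1,k_2$, $vu=\rho^{k_2}(u)\rho^{-k_1}(v)$. Wiring diagrams: a word is drawn left to right on a cylinder with wires in positions $1,\dots,n$ (mod $n$), $s_i$ crossing positions $i,i+1$. Universal cover: positions become integers (position $p$ lying over $p \bmod n$), each crossing $s_i$ lifting to crossings of positions $p,p+1$ for all $p\equiv i$; lifted wires are labelled by integers according to their positions at a fixed vertical line, and these labels are carried along unchanged by braid and commutation moves. A chamber is a connected region of the complement of the lifted wires; if $S\subseteq\mathbb Z$ is the set of labels of wires passing below it, its label is $[S]=(\mathbf s_1,\dots,\mathbf s_n)$ with $\mathbf s_i=\lceil \max\{b\in S:b\equiv i\bmod n\}/n\rceil$. Trajectory: for a glide $g$ with a reduced word, draw the diagram of the word with lifted wires labelled by their starting positions (left end); $t(g)$ is the label of the chamber directly above the wire labelled $1$ at the right end minus the label of the chamber directly above wire $1$ at the left end, an element of $\mathbb Z^n/\mathbb Z(1,\dots,1)$. Time evolution: starting from $\Gamma$, one time step inserts a rotation $\rho^{Ik_1}(v)$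 immediately to the left of the copy $\rho^{Ik_1}(u)$ far to the left and pushes it to the right through all copies using $\rho^{ik_1}(v)\rho^{ik_1}(u)=\rho^{ik_1+k_2}(u)\rho^{(i-1)k_1}(v)$ (realized by braid and commutation moves); the result is the bi-infinite word in which the $i$-th copy is $\rho^{-ik_1+k_2}(u)$. After $m$ steps the $i$-th copy is $\rho^{-ik_1+mk_2}(u)$. *)

From Stdlib Require Import ZArith List Lia.
Import ListNotations.
Open Scope Z_scope.

(** Affine symmetric group hat S_n, realized (faithfully) as the group of
    affine permutations of Z.  A letter [a : Z] stands for the generator
    s_(a mod n). *)
Definition sigma (n a p : Z) : Z :=
  if (p - a) mod n =? 0 then p + 1
  else if (p - a - 1) mod n =? 0 then p - 1 else p.

Definition word_perm (n : Z) (w : list Z) : Z -> Z :=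
  fold_right (fun a f p => sigma n a (f p)) (fun p => p) w.

Definition reduced (n : Z) (w : list Z) : Prop :=
  forall w' : list Z, (forall p, word_perm n w' p = word_perm n w p) ->
    (length w <= length w')%nat.

Definition glide (n : Z) (w : list Z) (k : Z) : Prop :=
  0 <= k < n /\ forall j : Z, (word_perm n w j - j - k) mod n = 0.

Definition rot (c : Z) (w : list Z) : list Z := map (fun a => a + c) w.

Definition ceil_div (M n : Z) : Z := - ((- M) / n).

(** Set of labels of the wires lying weakly below lifted position p on a
    vertical line whose position->label map is L. *)
Definition below (L : Z -> Z) (p : Z) : Z -> Prop :=
  fun b => exists q, q <= p /\ L q = b.

Definition IsLabel (n : Z) (S : Z -> Prop) (s : Z -> Z) : Prop :=
  forall a, 1 <= a <= n ->
    exists M, S M /\ (M - a) mod n = 0 /\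
      (forall b, S b -> (b - a) mod n = 0 -> b <= M) /\
      s a = ceil_div M n.

(** Trajectory t(g) of a word g (representative in Z^n; only entries 1..n
    matter): wires labelled by starting positions, so the line at the left
    end is the identity and at the right end is [word_perm n g]; wire 1 sits
    at position 1 on the left and at position p1 with (word_perm n g p1 = 1)
    on the right; the chamber directly above it is the gap between p1, p1+1. *)
Definition trajectory (n : Z) (g : list Z) (tg : Z -> Z) : Prop :=
  exists p1 sL sR,
    word_perm n g p1 = 1 /\
    IsLabel n (below (fun q => q) 1) sL /\
    IsLabel n (below (word_perm n g) p1) sR /\
    forall a, tg a = sR a - sL a.

(** The bi-infinite word after s steps of time evolution:
    the letter at time t (crossing between vertical lines t and t+1) is the
    ((t mod l)+1)-th letter of the copy number (t / l), and copy number i is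
    rho^(-i k1 + s k2)(u).  (s = 0 gives Gamma: ... rho^(k1)(u) u rho^(-k1)(u) ...,
    copy 0 = u occupying times 0..l-1.)  [None] = no crossing (only if u = []). *)
Definition gamma_word (u : list Z) (k1 k2 : Z) (s : nat) (t : Z) : option Z :=
  let l := Z.of_nat (length u) in
  if l =? 0 then None
  else Some (nth (Z.to_nat (t mod l)) u 0 - (t / l) * k1 + Z.of_nat s * k2).

Definition seg (w : Z -> option Z) (t T : Z) : list Z :=
  flat_map (fun k => match w (t + Z.of_nat k) with Some a => [a] | None => [] end)
           (seq 0 (Z.to_nat (T - t))).

(** Labelled lifted wiring diagrams along the time evolution.
    [L s t] is the position -> wire-label map on vertical line t (just left
    of the crossing at time t) of the diagram after s steps.
    - Gamma (s = 0) is labelled by the positions on the vertical line 0,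
      i.e. immediately to the left of the copy u.
    - Each [L s] is consistent with the word [gamma_word u k1 k2 s].
    - Time step s -> s+1: the rotation of v is inserted far to the left
      (without changing labels near the finite part of the diagram) and
      pushed to the right through the copies by braid and commutation moves,
      which carry wire labels along and hence do not change labels on the
      vertical lines bounding the modified block.  After it has passed copy
      J >= 0 (so it is rho^(-(J+1)k1 + s k2)(v), located between times
      (J+1)l-1 and (J+1)l of the old diagram), the diagram is: the new word
      on times < (J+1)l, then that rotation of v, then the old diagram; the
      labels right of v are the old ones.  Labels on line t <= (J+1)l of the
      new diagram are obtained from those. *)
Definition evolution (n : Z) (u v : list Z) (k1 k2 : Z)
    (L : nat -> Z -> Z -> Z) : Prop :=
  let l := Z.of_nat (length u) in
  (forall q, L O 0 q = q) /\
  (forall s t q, L s (t + 1) q =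
     match gamma_word u k1 k2 s t with
     | Some a => L s t (sigma n a q)
     | None => L s t q
     end) /\
  (forall (s : nat) (J t q : Z), 0 <= J -> t <= (J + 1) * l ->
     L (S s) t
       (word_perm n (seg (gamma_word u k1 k2 (S s)) t ((J + 1) * l)
                     ++ rot (- (J + 1) * k1 + Z.of_nat s * k2) v) q)
     = L s ((J + 1) * l) q).

(** Isomorphism of the cylindric (unlabelled) wiring diagrams given by
    rotating the cylinder by r and sending the crossing at time t of the
    first word to the crossing at time t + d of the second. *)
Definition cyl_iso (n r d : Z) (w w' : Z -> option Z) : Prop :=
  forall t, match w t, w' (t + d) with
            | Some a, Some b => (b - a - r) mod n = 0
            | None, None => True
            | _, _ => False
            end.

From Stdlib Require Import ZArith List Lia.
Import ListNotations.
Open Scope Z_scope.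

(** Every map relating wire labels of the diagrams involved is a
    residue translation [x |-> x + n e(x)], with [e] depending only on [x mod n],
    and such a map shifts chamber labels by [e].  Moving one copy of [u] to the
    right acts on labels by the glide [u] followed by [rho^(-k1)], whose
    displacement is [t(u)] up to a constant; each evolution step, after pushing
    the new rotation of [v] through copy 0, undoes one application of the
    untwisted glide [rho^(-k2)(v)], whose displacement is [t(v~)].  Since every
    crossing is an involution, two labellings of words differing by a rotation
    that agree at one time agree at all times, so the two effects combine to
    [s' = s + i t(u) - m t(v~)] up to a constant. *)

Lemma mod_mul_l (n c : Z) : (n * c) mod n = 0.
Proof. rewrite Z.mul_comm. apply Z_mod_mult. Qed.

Lemma mod_add_of_mod0 (n x c : Z) : n <> 0 -> x mod n = 0 -> (x + c) mod n = c mod n.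
Proof. intros Hn Hx. rewrite Z.add_mod, Hx, Z.add_0_l, Z.mod_mod by exact Hn. reflexivity. Qed.

Lemma sigma_translate (n a r q : Z) : sigma n (a + r) (q + r) = sigma n a q + r.
Proof.
  unfold sigma.
  replace (q + r - (a + r)) with (q - a) by ring.
  replace (q + r - (a + r) - 1) with (q - a - 1) by ring.
  destruct ((q - a) mod n =? 0); [ring|]. destruct ((q - a - 1) mod n =? 0); ring.
Qed.

Lemma sigma_periodic (n a p c : Z) : sigma n a (p + n * c) = sigma n a p + n * c.
Proof.
  unfold sigma.
  replace (p + n * c - a) with ((p - a) + c * n) by ring.
  replace ((p - a) + c * n - 1) with ((p - a - 1) + c * n) by ring.
  rewrite !Z_mod_plus_full.
  destruct ((p - a) mod n =? 0); [ring|]. destruct ((p - a - 1) mod n =? 0); ring.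
Qed.

Lemma sigma_involutive (n a p : Z) : 2 <= n -> sigma n a (sigma n a p) = p.
Proof.
  intros Hn. assert (H1 : 1 mod n = 1) by (apply Z.mod_small; lia).
  unfold sigma at 2.
  destruct ((p - a) mod n =? 0) eqn:E1; [|destruct ((p - a - 1) mod n =? 0) eqn:E2].
  - apply Z.eqb_eq in E1. unfold sigma.
    replace (p + 1 - a) with ((p - a) + 1) by ring.
    rewrite (mod_add_of_mod0 n _ _ ltac:(lia) E1), H1.
    replace (p - a + 1 - 1) with (p - a) by ring. rewrite E1. simpl. ring.
  - apply Z.eqb_eq in E2. unfold sigma.
    replace (p - 1 - a) with (p - a - 1) by ring. rewrite E2. simpl. ring.
  - unfold sigma. rewrite E1, E2. reflexivity.
Qed.

Lemma word_perm_cons (n a : Z) (w : list Z) (p : Z) :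
  word_perm n (a :: w) p = sigma n a (word_perm n w p).
Proof. reflexivity. Qed.

Lemma word_perm_rot (n c : Z) (w : list Z) (q : Z) :
  word_perm n (rot c w) q = word_perm n w (q - c) + c.
Proof.
  induction w as [|a w IH]; [simpl; ring|].
  change (sigma n (a + c) (word_perm n (rot c w) q) = sigma n a (word_perm n w (q - c)) + c).
  rewrite IH. apply sigma_translate.
Qed.

Lemma word_perm_periodic (n : Z) (w : list Z) (p c : Z) :
  word_perm n w (p + n * c) = word_perm n w p + n * c.
Proof.
  induction w as [|a w IH]; [reflexivity|].
  rewrite !word_perm_cons, IH. apply sigma_periodic.
Qed.

Lemma glide_rot (n : Z) (w : list Z) (k c : Z) : glide n w k -> glide n (rot c w) k.
Proof.
  intros [Hk Hw]. split; [exact Hk|]. intro j. rewrite word_perm_rot.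
  replace (word_perm n w (j - c) + c - j - k) with (word_perm n w (j - c) - (j - c) - k) by ring.
  apply Hw.
Qed.

Definition residue_translation (n : Z) (G e : Z -> Z) : Prop :=
  (forall x, G x = x + n * e x) /\ (forall x y, (x - y) mod n = 0 -> e x = e y).

Section ResidueTranslation.

Variable n : Z.

Lemma residue_translation_periodic (G e : Z -> Z) (x c : Z) :
  residue_translation n G e -> e (x + n * c) = e x.
Proof.
  intros [_ He]. apply He. replace (x + n * c - x) with (n * c) by ring. apply mod_mul_l.
Qed.

Lemma residue_translation_ext (G G' e e' : Z -> Z) :
  residue_translation n G e -> (forall x, G' x = G x) -> (forall x, e' x = e x) ->
  residue_translation n G' e'.
Proof.
  intros [HG He] EG Ee. split.
  - intro x. rewrite EG, Ee. apply HG.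
  - intros x y Hxy. rewrite !Ee. exact (He x y Hxy).
Qed.

Lemma residue_translation_const (c : Z) :
  residue_translation n (fun x => x + n * c) (fun _ => c).
Proof. split; reflexivity. Qed.

Lemma residue_translation_comp (G H eG eH : Z -> Z) :
  residue_translation n G eG -> residue_translation n H eH ->
  residue_translation n (fun x => G (H x)) (fun x => eH x + eG x).
Proof.
  intros RG RH. pose proof RG as [HG HeG]. pose proof RH as [HH HeH]. split.
  - intro x. rewrite HG, HH, (residue_translation_periodic G eG x (eH x) RG). ring.
  - intros x y Hxy. rewrite (HeG x y Hxy), (HeH x y Hxy). reflexivity.
Qed.

Lemma residue_translation_cancel_l (G X Y eG eY : Z -> Z) :
  residue_translation n G eG -> residue_translation n Y eY ->
  (forall x, G (X x) = Y x) -> residue_translation n X (fun x => eY x - eG x).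
Proof.
  intros [HG HeG] [HY HeY] EX.
  assert (HX : forall x, X x = x + n * (eY x - eG (X x))).
  { intro x. specialize (EX x). rewrite HG, HY in EX. lia. }
  assert (EG : forall x, eG (X x) = eG x).
  { intro x. apply HeG. rewrite (HX x). replace (x + n * (eY x - eG (X x)) - x)
      with (n * (eY x - eG (X x))) by ring. apply mod_mul_l. }
  split.
  - intro x. rewrite HX at 1. rewrite EG. reflexivity.
  - intros x y Hxy. rewrite (HeG x y Hxy), (HeY x y Hxy). reflexivity.
Qed.

Lemma residue_translation_cancel_r (W X Y eW eY : Z -> Z) :
  residue_translation n W eW -> residue_translation n Y eY ->
  (forall x, X (W x) = Y x) -> residue_translation n X (fun x => eY x - eW x).
Proof.
  intros RW RY EX. pose proof RW as [HW HeW]. pose proof RY as [HY HeY]. split.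
  - intro z.
    set (x := z + n * - eW z).
    assert (HWx : W x = z).
    { unfold x. rewrite HW, (residue_translation_periodic W eW z _ RW). ring. }
    rewrite <- HWx at 1. rewrite EX, HY. unfold x.
    rewrite (residue_translation_periodic Y eY z _ RY). ring.
  - intros x y Hxy. rewrite (HeW x y Hxy), (HeY x y Hxy). reflexivity.
Qed.

Lemma residue_translation_iter (U eU : Z -> Z) (Phi : Z -> Z -> Z) :
  residue_translation n U eU -> (forall x, Phi 0 x = x) ->
  (forall j x, Phi (j + 1) x = U (Phi j x)) ->
  forall j, residue_translation n (Phi j) (fun x => j * eU x).
Proof.
  intros RU H0 HS j. induction j as [|j IH|j IH] using Z.peano_ind.
  - apply (residue_translation_ext _ _ _ _ (residue_translation_const 0)).
    + intro x. rewrite H0. ring.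
    + intro x. ring.
  - apply (residue_translation_ext _ _ _ _ (residue_translation_comp _ _ _ _ RU IH)).
    + exact (HS j).
    + intro x. unfold Z.succ. ring.
  - refine (residue_translation_ext _ _ _ _
              (residue_translation_cancel_l U (Phi (Z.pred j)) (Phi j) _ _ RU IH _) _ _).
    + intro x. rewrite <- HS. f_equal. unfold Z.pred. ring.
    + reflexivity.
    + intro x. unfold Z.pred. ring.
Qed.

End ResidueTranslation.

Lemma label_translate (n : Z) (G e A B : Z -> Z) (r p : Z) (s : Z -> Z) :
  0 < n -> residue_translation n G e -> (forall q, B (q + r) = G (A q)) ->
  IsLabel n (below A p) s -> IsLabel n (below B (p + r)) (fun a => s a + e a).
Proof.
  intros Hn RG HBA HL a Ha. pose proof RG as [HG He].
  destruct (HL a Ha) as [M [[q [Hq HqM]] [HMa [Hmax Hs]]]].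
  assert (HeM : e M = e a) by exact (He M a HMa).
  exists (G M). split; [|split; [|split]].
  - exists (q + r). split; [lia|]. rewrite HBA, HqM. reflexivity.
  - rewrite HG. replace (M + n * e M - a) with ((M - a) + e M * n) by ring.
    rewrite Z_mod_plus_full. exact HMa.
  - intros b [q' [Hq' <-]] Hba.
    assert (HBq : B q' = G (A (q' - r))) by (rewrite <- HBA; f_equal; ring).
    assert (Hb0 : below A p (A (q' - r))) by (exists (q' - r); split; [lia|reflexivity]).
    rewrite HBq, HG in *. set (b0 := A (q' - r)) in *.
    replace (b0 + n * e b0 - a) with ((b0 - a) + e b0 * n) in Hba by ring.
    rewrite Z_mod_plus_full in Hba.
    pose proof (Hmax b0 Hb0 Hba).
    rewrite HG, (He b0 a Hba), <- HeM. lia.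
  - rewrite Hs, HG, HeM. unfold ceil_div.
    replace (- (M + n * e a)) with (- M + - e a * n) by ring.
    rewrite Z.div_add by lia. ring.
Qed.

Lemma label_unique (n : Z) (S : Z -> Prop) (s s' : Z -> Z) :
  IsLabel n S s -> IsLabel n S s' -> forall a, 1 <= a <= n -> s a = s' a.
Proof.
  intros H H' a Ha.
  destruct (H a Ha) as [M [HM [HMa [Hmax Hs]]]].
  destruct (H' a Ha) as [M' [HM' [HMa' [Hmax' Hs']]]].
  assert (M = M') by (pose proof (Hmax _ HM' HMa'); pose proof (Hmax' _ HM HMa); lia).
  subst. congruence.
Qed.

(** Followed by the shift by [-k], a glide of offset [k] fixes every residue class. *)
Definition glide_perm (n k : Z) (g : list Z) (x : Z) : Z := word_perm n g (x - k).

Definition glide_disp (n k : Z) (g : list Z) (x : Z) : Z := (glide_perm n k g x - x) / n.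

Lemma glide_perm_residue_translation (n k : Z) (g : list Z) :
  glide n g k -> residue_translation n (glide_perm n k g) (glide_disp n k g).
Proof.
  intros [Hk Hg]. split.
  - intro x. unfold glide_disp.
    assert (E : (glide_perm n k g x - x) mod n = 0).
    { unfold glide_perm. replace (word_perm n g (x - k) - x)
        with (word_perm n g (x - k) - (x - k) - k) by ring. apply Hg. }
    apply Z.div_exact in E; lia.
  - intros x y Hxy. unfold glide_disp, glide_perm. f_equal.
    apply Z.div_exact in Hxy; [|lia].
    replace (x - k) with ((y - k) + n * ((x - y) / n)) by lia.
    rewrite word_perm_periodic. lia.
Qed.

Lemma glide_perm_rot (n k : Z) (v : list Z) (x : Z) :
  glide_perm n k (rot (- k) v) x = word_perm n v x - k.
Proof. unfold glide_perm. rewrite word_perm_rot. replace (x - k - - k) with x by ring. ring. Qed.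

Lemma trajectory_glide_disp (n k : Z) (g : list Z) (tg : Z -> Z) :
  glide n g k -> trajectory n g tg ->
  exists c, forall a, 1 <= a <= n -> tg a = glide_disp n k g a + c.
Proof.
  intros Hg [p1 [sL [sR [Hp1 [HL [HR Ht]]]]]].
  pose proof (glide_perm_residue_translation n k g Hg) as Rg.
  destruct Hg as [Hk _].
  set (c := glide_disp n k g (p1 + k)).
  assert (Hc : p1 + k = 1 - n * c).
  { destruct Rg as [HG _]. specialize (HG (p1 + k)). fold c in HG.
    unfold glide_perm in HG. replace (p1 + k - k) with p1 in HG by ring. lia. }
  assert (Lab : IsLabel n (below (word_perm n g) (1 + (p1 - 1)))
                  (fun a => sL a + (- c + glide_disp n k g a))).
  { apply (label_translate n (fun x => glide_perm n k g (x + n * - c)) _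
           (fun q => q) _ (p1 - 1) 1 sL); [lia| |intro q|exact HL].
    - exact (residue_translation_comp n _ _ _ _ Rg (residue_translation_const n (- c))).
    - unfold glide_perm. f_equal. lia. }
  replace (1 + (p1 - 1)) with p1 in Lab by ring.
  exists (- c). intros a Ha. rewrite Ht, <- (label_unique _ _ _ _ Lab HR a Ha). cbv beta. ring.
Qed.

Definition letter_perm (n : Z) (o : option Z) : Z -> Z :=
  match o with Some a => sigma n a | None => fun q => q end.

Definition labelling (n : Z) (w : Z -> option Z) (A : Z -> Z -> Z) : Prop :=
  forall t q, A (t + 1) q = A t (letter_perm n (w t) q).

Lemma letter_perm_translate (n r : Z) (o : option Z) (q : Z) :
  letter_perm n (option_map (fun a => a + r) o) (q + r) = letter_perm n o q + r.
Proof. destruct o; simpl; [apply sigma_translate|reflexivity]. Qed.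

Lemma letter_perm_involutive (n : Z) (o : option Z) (q : Z) :
  2 <= n -> letter_perm n o (letter_perm n o q) = q.
Proof. intros Hn. destruct o; simpl; [apply sigma_involutive, Hn|reflexivity]. Qed.

Lemma labelling_word (n : Z) (w : Z -> option Z) (A : Z -> Z -> Z) (g : list Z) (t0 : Z) :
  labelling n w A ->
  (forall k, (k < length g)%nat -> w (t0 + Z.of_nat k) = Some (nth k g 0)) ->
  forall q, A (t0 + Z.of_nat (length g)) q = A t0 (word_perm n g q).
Proof.
  intros HA. revert t0. induction g as [|a g IH]; intros t0 Hw q.
  - simpl. rewrite Z.add_0_r. reflexivity.
  - rewrite word_perm_cons.
    replace (t0 + Z.of_nat (length (a :: g))) with ((t0 + 1) + Z.of_nat (length g))
      by (simpl length; lia).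
    rewrite IH.
    + rewrite HA. specialize (Hw 0%nat ltac:(simpl; lia)). rewrite Z.add_0_r in Hw.
      rewrite Hw. reflexivity.
    + intros k Hk. replace (t0 + 1 + Z.of_nat k) with (t0 + Z.of_nat (S k)) by lia.
      apply (Hw (S k)). simpl. lia.
Qed.

(** Crossings are involutions, so agreement also propagates backwards in time. *)
Lemma labelling_transport (n r t0 : Z) (w w' : Z -> option Z) (A B : Z -> Z -> Z)
    (F : Z -> Z) :
  2 <= n -> labelling n w A -> labelling n w' B ->
  (forall t, w' t = option_map (fun a => a + r) (w t)) ->
  (forall q, B t0 (q + r) = F (A t0 q)) ->
  forall t q, B t (q + r) = F (A t q).
Proof.
  intros Hn HA HB Hw H0.
  assert (Hstep : forall t q, B (t + 1) (q + r) = B t (letter_perm n (w t) q + r)).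
  { intros t q. rewrite HB, Hw, letter_perm_translate. reflexivity. }
  intro t. replace t with (t0 + (t - t0)) by ring. generalize (t - t0) as d.
  intro d. induction d as [|d IH|d IH] using Z.peano_ind.
  - rewrite Z.add_0_r. exact H0.
  - intro q. unfold Z.succ. rewrite Z.add_assoc, Hstep, IH, HA. reflexivity.
  - intro q. unfold Z.pred in *.
    rewrite <- (letter_perm_involutive n (w (t0 + (d + -1))) q Hn).
    rewrite <- Hstep, <- HA. replace (t0 + (d + -1) + 1) with (t0 + d) by ring.
    apply IH.
Qed.

Lemma gamma_word_shift (u : list Z) (k1 k2 : Z) (s s' : nat) (t c : Z) :
  gamma_word u k1 k2 s (t + c * Z.of_nat (length u)) =
  option_map (fun a => a + (- c * k1 + (Z.of_nat s - Z.of_nat s') * k2))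
    (gamma_word u k1 k2 s' t).
Proof.
  unfold gamma_word; cbv zeta. destruct (Z.of_nat (length u) =? 0) eqn:E; [reflexivity|].
  apply Z.eqb_neq in E. simpl. f_equal.
  rewrite Z_mod_plus_full, Z.div_add by exact E. ring.
Qed.

Lemma gamma_word_first_copy (u : list Z) (k1 k2 : Z) (k : nat) :
  (k < length u)%nat -> gamma_word u k1 k2 O (Z.of_nat k) = Some (nth k u 0).
Proof.
  intros Hk. unfold gamma_word; cbv zeta.
  destruct (Z.of_nat (length u) =? 0) eqn:E; [apply Z.eqb_eq in E; lia|].
  rewrite Z.mod_small, Z.div_small, Nat2Z.id by lia. f_equal. ring.
Qed.

Lemma seg_empty (w : Z -> option Z) (t : Z) : seg w t t = [].
Proof. unfold seg. rewrite Z.sub_diag. reflexivity. Qed.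

Section TimeEvolution.

Variables (n : Z) (u v : list Z) (k1 k2 : Z) (L : nat -> Z -> Z -> Z).
Hypotheses (Hn : 2 <= n) (Hu : glide n u k1) (Hv : glide n v k2)
  (HL : evolution n u v k1 k2 L).

Local Notation l := (Z.of_nat (length u)).
Local Notation U := (glide_perm n k1 u).
Local Notation V := (glide_perm n k2 (rot (- k2) v)).
Local Notation eU := (glide_disp n k1 u).
Local Notation eV := (glide_disp n k2 (rot (- k2) v)).

Lemma evolution_labelling (s : nat) : labelling n (gamma_word u k1 k2 s) (L s).
Proof.
  destruct HL as [_ [HLs _]]. intros t q. rewrite HLs.
  destruct (gamma_word u k1 k2 s t); reflexivity.
Qed.

Lemma evolution0_first_copy (q : Z) : L O l q = word_perm n u q.
Proof.
  destruct HL as [HL0 _]. rewrite <- (HL0 (word_perm n u q)).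
  rewrite <- (Z.add_0_l l). apply (labelling_word n _ _ u 0 (evolution_labelling O)).
  intros k Hk. rewrite Z.add_0_l. apply gamma_word_first_copy, Hk.
Qed.

Lemma evolution0_next_copy (t q : Z) : L O (t + l) (q + - k1) = U (L O t q).
Proof.
  destruct HL as [HL0 _].
  apply (labelling_transport n (- k1) 0 (gamma_word u k1 k2 O)
           (fun t => gamma_word u k1 k2 O (t + l)) (L O) (fun t => L O (t + l)));
    [exact Hn|apply evolution_labelling| |..].
  - intros t' q'. replace (t' + 1 + l) with ((t' + l) + 1) by ring. apply evolution_labelling.
  - intro t'. rewrite <- (Z.mul_1_l l) at 1. rewrite (gamma_word_shift u k1 k2 O O).
    destruct (gamma_word u k1 k2 O t'); cbn [option_map]; [f_equal; ring|reflexivity].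
  - intro q'. rewrite HL0, Z.add_0_l, evolution0_first_copy. reflexivity.
Qed.

Lemma evolution0_copies (j : Z) :
  residue_translation n (fun x => L O (j * l) (x - j * k1)) (fun x => j * eU x).
Proof.
  destruct HL as [HL0 _].
  apply (residue_translation_iter n U eU (fun j x => L O (j * l) (x - j * k1))).
  - exact (glide_perm_residue_translation n k1 u Hu).
  - intro x. rewrite !Z.mul_0_l, Z.sub_0_r. apply HL0.
  - intros j' x. rewrite <- evolution0_next_copy. f_equal; ring.
Qed.

Lemma evolution_at_time (s : nat) (t q : Z) :
  L s t (q + Z.of_nat s * k2) = L s 0 (L O t q + Z.of_nat s * k2).
Proof.
  destruct HL as [HL0 _].
  apply (labelling_transport n (Z.of_nat s * k2) 0 (gamma_word u k1 k2 O) (gamma_word u k1 k2 s)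
           (L O) (L s) (fun x => L s 0 (x + Z.of_nat s * k2)));
    [exact Hn|apply evolution_labelling|apply evolution_labelling| |].
  - intro t'. rewrite <- (Z.add_0_r t') at 1. rewrite <- (Z.mul_0_l l).
    rewrite (gamma_word_shift u k1 k2 s O).
    destruct (gamma_word u k1 k2 O t'); cbn [option_map]; [f_equal; ring|reflexivity].
  - intro q'. rewrite HL0. reflexivity.
Qed.

(** The rotation of [v] inserted at step [s + 1], once pushed through copy 0. *)
Lemma evolution_step_push (s : nat) (x : Z) :
  L (S s) 0 (U (V x) + Z.of_nat (S s) * k2) = L s 0 (U x + Z.of_nat s * k2).
Proof.
  destruct HL as [_ [_ HLpush]].
  pose proof (HLpush s 0 l (x + (- k1 + Z.of_nat s * k2)) ltac:(lia) ltac:(lia)) as E.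
  replace ((0 + 1) * l) with l in E by ring. replace (- (0 + 1) * k1) with (- k1) in E by ring.
  rewrite seg_empty, app_nil_l, word_perm_rot in E.
  replace (x + (- k1 + Z.of_nat s * k2) - (- k1 + Z.of_nat s * k2)) with x in E by ring.
  unfold glide_perm at 1 3. rewrite <- !evolution0_first_copy, <- !evolution_at_time, glide_perm_rot.
  rewrite Nat2Z.inj_succ.
  replace (word_perm n v x - k2 - k1 + Z.succ (Z.of_nat s) * k2)
    with (word_perm n v x + (- k1 + Z.of_nat s * k2)) by ring.
  replace (x - k1 + Z.of_nat s * k2) with (x + (- k1 + Z.of_nat s * k2)) by ring.
  exact E.
Qed.

Lemma evolution_steps (s : nat) :
  residue_translation n (fun x => L s 0 (x + Z.of_nat s * k2)) (fun x => - Z.of_nat s * eV x).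
Proof.
  destruct HL as [HL0 _].
  pose proof (glide_perm_residue_translation n k1 u Hu) as RU.
  pose proof (glide_perm_residue_translation n k2 _ (glide_rot n v k2 (- k2) Hv)) as RV.
  induction s as [|s IH].
  - apply (residue_translation_ext n _ _ _ _ (residue_translation_const n 0)).
    + intro x. rewrite HL0. ring.
    + intro x. ring.
  - refine (residue_translation_ext n _ _ _ _
              (residue_translation_cancel_r n _ (fun x => L (S s) 0 (x + Z.of_nat (S s) * k2)) _ _ _
                 (residue_translation_comp n _ _ _ _ RU RV)
                 (residue_translation_comp n _ _ _ _ IH RU) (evolution_step_push s)) _ _).
    + reflexivity.
    + intro x. rewrite Nat2Z.inj_succ. ring.
Qed.

Lemma evolution_copies_after_steps (m : nat) (i : Z) :
  residue_translation n (fun x => L m (i * l) (x + (- i * k1 + Z.of_nat m * k2)))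
    (fun x => i * eU x - Z.of_nat m * eV x).
Proof.
  refine (residue_translation_ext n _ _ _ _
            (residue_translation_comp n _ _ _ _ (evolution_steps m) (evolution0_copies i)) _ _).
  - intro x. rewrite <- evolution_at_time. f_equal. ring.
  - intro x. ring.
Qed.

Lemma evolution_translate (m : nat) (i t q : Z) :
  L m (t + i * l) (q + (- i * k1 + Z.of_nat m * k2)) =
  L m (i * l) (L O t q + (- i * k1 + Z.of_nat m * k2)).
Proof.
  destruct HL as [HL0 _]. revert t q.
  apply (labelling_transport n _ 0 (gamma_word u k1 k2 O) (fun t => gamma_word u k1 k2 m (t + i * l))
           (L O) (fun t => L m (t + i * l)) (fun x => L m (i * l) (x + (- i * k1 + Z.of_nat m * k2))));
    [exact Hn|apply evolution_labelling| |intro t|intro q].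
  - intros t q. replace (t + 1 + i * l) with ((t + i * l) + 1) by ring. apply evolution_labelling.
  - rewrite (gamma_word_shift u k1 k2 m O).
    destruct (gamma_word u k1 k2 O t); cbn [option_map]; [f_equal; ring|reflexivity].
  - rewrite HL0, Z.add_0_l. reflexivity.
Qed.

End TimeEvolution.

Theorem proposition5p4 (n : Z) (u v : list Z) (k1 k2 : Z) (m : nat) (i : Z)
    (L : nat -> Z -> Z -> Z) (tu tv : Z -> Z) :
  2 <= n ->
  reduced n u -> reduced n v ->
  glide n u k1 -> glide n v k2 ->
  reduced n (v ++ u) ->
  trajectory n u tu ->
  trajectory n (rot (- k2) v) tv ->
  evolution n u v k1 k2 L ->
  exists r : Z,
    cyl_iso n r (i * Z.of_nat (length u))
      (gamma_word u k1 k2 O) (gamma_word u k1 k2 m) /\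
    forall (t p : Z) (s s' : Z -> Z),
      IsLabel n (below (L O t) p) s ->
      IsLabel n (below (L m (t + i * Z.of_nat (length u))) (p + r)) s' ->
      exists c : Z, forall a, 1 <= a <= n ->
        s' a = s a + i * tu a - Z.of_nat m * tv a + c.
Proof.
  intros Hn _ _ Hu Hv _ Htu Htv HL.
  exists (- i * k1 + Z.of_nat m * k2). split.
  - intro t. rewrite (gamma_word_shift u k1 k2 m O).
    destruct (gamma_word u k1 k2 O t) as [a|]; cbn [option_map Z.of_nat]; [|exact I].
    replace (a + (- i * k1 + (Z.of_nat m - 0) * k2) - a - (- i * k1 + Z.of_nat m * k2))
      with 0 by ring. apply Zmod_0_l.
  - intros t p s s' Hs Hs'.
    destruct (trajectory_glide_disp n k1 u tu Hu Htu) as [cu Hcu].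
    destruct (trajectory_glide_disp n k2 _ tv (glide_rot n v k2 (- k2) Hv) Htv) as [cv Hcv].
    pose proof (label_translate n _ _ _ _ _ p s ltac:(lia)
                  (evolution_copies_after_steps n u v k1 k2 L Hn Hu Hv HL m i)
                  (evolution_translate n u v k1 k2 L Hn HL m i t) Hs) as Hs''.
    exists (- i * cu + Z.of_nat m * cv). intros a Ha.
    rewrite <- (label_unique _ _ _ _ Hs'' Hs' a Ha), (Hcu a Ha), (Hcv a Ha). ring.
Qed.
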